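(* Let $P$ be a special product rule. For every $P$-automaton $\mathcal A=\langle X,F,\Delta\rangle$ and all terms $u,v\in\mathrm{Terms}(X)$ with $u\approx v$, we have $[\![u]\!]_{\mathcal A}=[\![v]\!]_{\mathcal A}$.
   Context: Let $\Sigma$ be a finite alphabet, $\Sigma^*$ its finite words with empty word $\varepsilon$. A series is $f:\Sigma^*\to\mathbb Q$; $\delta_af$ ($a\in\Sigma$) is $w\mapsto f(aw)$. Terms: $\mathrm{Terms}(X)$ generated by $u,v::=x\mid 0\mid c\cdot u\mid u+v\mid u*v$ ($c\in\mathbb Q$). A product rule is a term $P$ over $\{x,\dot x,y,\dot y\}$; $P(s_1,\dots,s_4)$ denotes substitution. $u\approx v$ iff $u,v$ denote the same polynomial in $\mathbb Q[X]$ (constructors read as polynomial operations). $P$ is special if $P(x+y,\dot x+\dot y,z,\dot z)\approx P(x,\dot x,z,\dot z)+P(y,\dot y,z,\dot z)$, $P(x,\dot x,y*z,P(y,\dot y,z,\dot z))\approx P(x*y,P(x,\dot x,y,\dot y),z,\dot z)$, $P(x,\dot x,y,\dot y)\approx P(y,\dot y,x,\dot x)$. $P$-automaton: $\mathcal A=\langle X,F,\Delta\rangle$ with $F:X\to\mathbb Q$, $\Delta_a:X\to\mathrm{Terms}(X)$ for $a\in\Sigma$. The $P$-extension $\tilde D$ of $D:X\to\mathrm{Terms}(X)$ is $\tilde D0=0$, $\tilde Dx=Dx$, $\tilde D(c\alpha)=c\tilde D\alpha$, $\tilde D(\alpha+\beta)=\tilde D\alpha+\tilde D\beta$, $\tilde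 D(\alpha*\beta)=P(\alpha,\tilde D\alpha,\beta,\tilde D\beta)$. $F$ is extended to terms by evaluation in $\mathbb Q$. $[\![\alpha]\!]_{\mathcal A}$ is the unique series with $([\![\alpha]\!]_{\mathcal A})_\varepsilon=F(\alpha)$ and $\delta_a[\![\alpha]\!]_{\mathcal A}=[\![\tilde\Delta_a\alpha]\!]_{\mathcal A}$ for all $a$ (equivalently $[\![\alpha]\!]_{\mathcal A}(a_1\cdots a_n)=F(\tilde\Delta_{a_n}\cdots\tilde\Delta_{a_1}\alpha)$). *)

From HB Require Import structures.
From mathcomp Require Import all_boot all_order all_algebra.
From mathcomp Require Import mpoly.
Set Implicit Arguments. Unset Strict Implicit. Unset Printing Implicit Defensive.
Import GRing.Theory.
Local Open Scope ring_scope.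

Inductive term (V : Type) : Type :=
| Var of V
| Zero
| Scale of rat & term V
| Add of term V & term V
| Mul of term V & term V.
Arguments Zero {V}.

Fixpoint subst (V W : Type) (s : V -> term W) (t : term V) : term W :=
  match t with
  | Var x => s x
  | Zero => Zero
  | Scale c u => Scale c (subst s u)
  | Add u v => Add (subst s u) (subst s v)
  | Mul u v => Mul (subst s u) (subst s v)
  end.

Fixpoint poly_of (V : finType) (t : term V) : {mpoly rat[#|V|]} :=
  match t with
  | Var x => 'X_(enum_rank x)
  | Zero => 0
  | Scale c u => c *: poly_of u
  | Add u v => poly_of u + poly_of v
  | Mul u v => poly_of u * poly_of v
  end.

Definition approx (V : finType) (u v : term V) : Prop := poly_of u = poly_of v.

(* A product rule: a term over the four variables x, x', y, y'
   (indices 0, 1, 2, 3 of 'I_4 respectively). *)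
Definition product_rule := term 'I_4.

Definition papp (P : product_rule) (W : Type) (s1 s2 s3 s4 : term W) : term W :=
  subst (fun i : 'I_4 => nth Zero [:: s1; s2; s3; s4] i) P.

Definition v6 (k : nat) : term 'I_6 := Var (@inord 5 k).

Definition special (P : product_rule) : Prop :=
  let x := v6 0 in let xd := v6 1 in let y := v6 2 in
  let yd := v6 3 in let z := v6 4 in let zd := v6 5 in
  [/\ approx (papp P (Add x y) (Add xd yd) z zd)
             (Add (papp P x xd z zd) (papp P y yd z zd)),
      approx (papp P x xd (Mul y z) (papp P y yd z zd))
             (papp P (Mul x y) (papp P x xd y yd) z zd)
    & approx (papp P x xd y yd) (papp P y yd x xd)].

Record automaton (Sigma X : Type) := Automaton {
  aF : X -> rat;
  aDelta : Sigma -> X -> term X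
}.

Fixpoint pext (P : product_rule) (X : Type) (D : X -> term X) (t : term X) : term X :=
  match t with
  | Var x => D x
  | Zero => Zero
  | Scale c u => Scale c (pext P D u)
  | Add u v => Add (pext P D u) (pext P D v)
  | Mul u v => let du := pext P D u in let dv := pext P D v in papp P u du v dv
  end.

Fixpoint evalF (X : Type) (F : X -> rat) (t : term X) : rat :=
  match t with
  | Var x => F x
  | Zero => 0
  | Scale c u => c * evalF F u
  | Add u v => evalF F u + evalF F v
  | Mul u v => evalF F u * evalF F v
  end.

Definition sem (P : product_rule) (Sigma X : Type) (A : automaton Sigma X)
    (alpha : term X) : seq Sigma -> rat :=
  fun w => evalF (aF A) (foldl (fun t a => pext P (aDelta A a) t) alpha w).

From HB Require Import structures.
From mathcomp Require Import all_boot all_order all_algebra.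
From mathcomp Require Import mpoly ssrAC.
From Stdlib Require Import FunctionalExtensionality.
Set Implicit Arguments. Unset Strict Implicit. Unset Printing Implicit Defensive.
Import GRing.Theory.
Local Open Scope ring_scope.

(** Since [F] is a ring evaluation, it suffices that every P-extension preserves
    [≈].  The P-extension of [D] factors as [pext P D t = subst (dsubst D) (dterm t)],
    where [dterm t] is the formal P-derivative of [t], a term over two copies
    [X ⊔ X'] of the variables, and [dsubst D] maps [x] to [x] and [x'] to [D x].
    Substitution respects [≈], so it remains to see that the polynomial of
    [dterm t] only depends on that of [t].  For this, evaluate [t] in the
    unitization of the algebra Q[X ⊔ X']² with product
    [(a, a') (b, b') = (a b, P(a, a', b, b'))]: the three identities defining a
    special product rule make this product additive (hence Q-linear), associative
    and commutative, and at [x ↦ (0, (x, x'))] the value of [t] is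
    [(0, (t, dterm t))]. *)

Fixpoint teval (S : nzRingType) (f : rat -> S) (V : Type) (e : V -> S) (t : term V) : S :=
  match t with
  | Var x => e x
  | Zero => 0
  | Scale c u => f c * teval f e u
  | Add u v => teval f e u + teval f e v
  | Mul u v => teval f e u * teval f e v
  end.

Section TermEvaluation.
Variables (S : nzRingType) (f : rat -> S).

Lemma eq_teval (V : Type) (e e' : V -> S) (t : term V) :
  e =1 e' -> teval f e t = teval f e' t.
Proof. by move=> ee'; elim: t => //= [c u ->|u -> v ->|u -> v ->]. Qed.

Lemma teval_subst (V W : Type) (e : W -> S) (s : V -> term W) (t : term V) :
  teval f e (subst s t) = teval f (fun x => teval f e (s x)) t.
Proof. by elim: t => //= [c u ->|u -> v ->|u -> v ->]. Qed.

End TermEvaluation.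

Lemma evalFE (V : Type) (F : V -> rat) (t : term V) : evalF F t = teval idfun F t.
Proof. by elim: t => //= [c u ->|u -> v ->|u -> v ->]. Qed.

Lemma subst_comp (U V W : Type) (s : V -> term W) (s' : U -> term V) (t : term U) :
  subst s (subst s' t) = subst (fun x => subst s (s' x)) t.
Proof. by elim: t => //= [c u ->|u -> v ->|u -> v ->]. Qed.

Lemma eq_subst (V W : Type) (s s' : V -> term W) (t : term V) :
  s =1 s' -> subst s t = subst s' t.
Proof. by move=> ss'; elim: t => //= [c u ->|u -> v ->|u -> v ->]. Qed.

Lemma subst_Var (V : Type) (t : term V) : subst (@Var V) t = t.
Proof. by elim: t => //= [c u ->|u -> v ->|u -> v ->]. Qed.

Lemma poly_ofE (V : finType) (t : term V) :
  poly_of t = teval (@mpolyC _ rat) (fun x => 'X_(enum_rank x)) t.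
Proof. by elim: t => //= [c u ->|u -> v ->|u -> v ->]; rewrite ?mul_mpolyC. Qed.

Lemma mmap_poly_of (S : comNzRingType) (f : {rmorphism rat -> S}) (V : finType)
    (e : V -> S) (t : term V) :
  mmap f (fun i => e (enum_val i)) (poly_of t) = teval f e t.
Proof.
elim: t => [x| |c u IH|u IHu v IHv|u IHu v IHv] /=.
- by rewrite mmapX mmap1U enum_rankK.
- by rewrite mmap0.
- by rewrite mmapZ IH.
- by rewrite mmapD IHu IHv.
- by rewrite rmorphM /= IHu IHv.
Qed.

Lemma approx_teval (S : comNzRingType) (f : {rmorphism rat -> S}) (V : finType)
    (e : V -> S) (u v : term V) :
  approx u v -> teval f e u = teval f e v.
Proof. by rewrite /approx -!(mmap_poly_of f e) => ->. Qed.

Lemma approx_subst (V W : finType) (s : V -> term W) (u v : term V) :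
  approx u v -> approx (subst s u) (subst s v).
Proof.
rewrite /approx !poly_ofE !teval_subst -!poly_ofE => uv.
under eq_teval do rewrite -poly_ofE; under [RHS]eq_teval do rewrite -poly_ofE.
exact: approx_teval.
Qed.

Definition prule (P : product_rule) (S : nzRingType) (f : rat -> S) (a da b db : S) : S :=
  teval f (fun i : 'I_4 => nth 0 [:: a; da; b; db] i) P.

Lemma teval_papp (P : product_rule) (S : nzRingType) (f : rat -> S) (V : Type)
    (e : V -> S) (s1 s2 s3 s4 : term V) :
  teval f e (papp P s1 s2 s3 s4) =
  prule P f (teval f e s1) (teval f e s2) (teval f e s3) (teval f e s4).
Proof. by rewrite teval_subst; apply: eq_teval => -[[|[|[|[|]]]]]. Qed.

Lemma subst_papp (P : product_rule) (V W : Type) (s : V -> term W) (s1 s2 s3 s4 : term V) :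
  subst s (papp P s1 s2 s3 s4) =
  papp P (subst s s1) (subst s s2) (subst s s3) (subst s s4).
Proof. by rewrite /papp subst_comp; apply: eq_subst => -[[|[|[|[|]]]]]. Qed.

Section SpecialRuleLaws.
Variables (P : product_rule) (S : comNzRingType) (f : {rmorphism rat -> S}).
Hypothesis sP : special P.
Local Notation prule := (prule P f).
Local Notation env6 l := (fun i : 'I_6 => nth 0 l i).

Lemma pruleD (a da b db c dc : S) :
  prule (a + b) (da + db) c dc = prule a da c dc + prule b db c dc.
Proof.
case: sP => add_rule _ _.
by have := approx_teval f (env6 [:: a; da; b; db; c; dc]) add_rule;
  rewrite /= !teval_papp /= !inordK.
Qed.

Lemma pruleA (a da b db c dc : S) :
  prule a da (b * c) (prule b db c dc) = prule (a * b) (prule a da b db) c dc.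
Proof.
case: sP => _ assoc_rule _.
by have := approx_teval f (env6 [:: a; da; b; db; c; dc]) assoc_rule;
  rewrite /= !teval_papp /= !inordK.
Qed.

Lemma pruleC (a da b db : S) : prule a da b db = prule b db a da.
Proof.
case: sP => _ _ comm_rule.
by have := approx_teval f (env6 [:: a; da; b; db; 0; 0]) comm_rule;
  rewrite /= !teval_papp /= !inordK.
Qed.

Lemma prule0 (b db : S) : prule 0 0 b db = 0.
Proof.
have := pruleD 0 0 0 0 b db; rewrite !addr0 -{1}[prule 0 0 b db]addr0.
by move/addrI/esym.
Qed.

Lemma pruleN (a da b db : S) : prule (- a) (- da) b db = - prule a da b db.
Proof. by apply/eqP; rewrite -addr_eq0 -pruleD !addNr prule0. Qed.

End SpecialRuleLaws.

Lemma pruleZ (P : product_rule) (S : comAlgType rat) (f : {rmorphism rat -> S})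
    (sP : special P) (k : rat) (a da b db : S) :
  prule P f (k *: a) (k *: da) b db = k *: prule P f a da b db.
Proof.
have additive : zmod_morphism (fun p : S * S => prule P f p.1 p.2 b db).
  by move=> [? ?] [? ?]; rewrite /= pruleD // pruleN.
exact: (rat_linear additive k (a, da)).
Qed.

Record nuComAlg := NuComAlg {
  nucar : lmodType rat;
  nmul : nucar -> nucar -> nucar;
  nmulC : commutative nmul;
  nmulA : associative nmul;
  nmulDl : left_distributive nmul +%R;
  nmulZl : forall (k : rat) (x y : nucar), nmul (k *: x) y = k *: nmul x y
}.

Section NonUnitalAlgebra.
Variable A : nuComAlg.
Local Notation "x ** y" := (nmul x y) (at level 40, left associativity).

Lemma nmulDr (x y z : nucar A) : x ** (y + z) = x ** y + x ** z.
Proof. by rewrite nmulC nmulDl !(nmulC x). Qed.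

Lemma nmulZr (k : rat) (x y : nucar A) : x ** (k *: y) = k *: (x ** y).
Proof. by rewrite nmulC nmulZl nmulC. Qed.

Lemma nmul0r (x : nucar A) : 0 ** x = 0.
Proof. by rewrite -(scale0r 0) nmulZl !scale0r. Qed.

End NonUnitalAlgebra.

Definition unitization (A : nuComAlg) := (rat * nucar A)%type.
HB.instance Definition _ (A : nuComAlg) :=
  GRing.Zmodule.copy (unitization A) (rat * nucar A)%type.

Section Unitization.
Variable A : nuComAlg.
Local Notation "x ** y" := (nmul x y) (at level 40, left associativity).

Definition uone : unitization A := (1, 0).
Definition umul (x y : unitization A) : unitization A :=
  (x.1 * y.1, x.1 *: y.2 + y.1 *: x.2 + x.2 ** y.2).

Lemma umulC : commutative umul.
Proof. by move=> [a x] [b y]; rewrite /umul /= mulrC [b *: x + _]addrC nmulC. Qed.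

Lemma umulA : associative umul.
Proof.
move=> [a x] [b y] [c z]; rewrite /umul /= mulrA; congr (_, _).
rewrite !scalerDr !nmulDl !nmulDr !nmulZl !nmulZr !scalerA nmulA !addrA.
by rewrite [c * a]mulrC [c * b]mulrC [LHS](ACl (1*2*4*6*3*5*7)).
Qed.

Lemma umul1 : left_id uone umul.
Proof. by move=> [a x]; rewrite /umul /= mul1r scale1r scaler0 nmul0r !addr0. Qed.

Lemma umulDl : left_distributive umul +%R.
Proof.
move=> [a x] [b y] [c z]; rewrite /umul /= mulrDl scalerDl scalerDr nmulDl.
by congr (_, _); rewrite !addrA [LHS](ACl (1*3*5*2*4*6)).
Qed.

Lemma uone_neq0 : uone != 0.
Proof. by apply/negP => /eqP [] /eqP; rewrite oner_eq0. Qed.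

HB.instance Definition _ := GRing.Zmodule_isComNzRing.Build (unitization A)
  umulA umulC umul1 umulDl uone_neq0.

Lemma umulE (x y : unitization A) : x * y = umul x y.
Proof. by []. Qed.

Definition uscalar (c : rat) : unitization A := (c, 0).

Lemma uscalar_is_zmod_morphism : zmod_morphism uscalar.
Proof. by move=> a b; congr (_, _); rewrite subr0. Qed.

Lemma uscalar_is_monoid_morphism : monoid_morphism uscalar.
Proof. by split=> // a b; congr (_, _); rewrite !scaler0 nmul0r !addr0. Qed.

HB.instance Definition _ :=
  GRing.isZmodMorphism.Build rat (unitization A) uscalar uscalar_is_zmod_morphism.
HB.instance Definition _ :=
  GRing.isMonoidMorphism.Build rat (unitization A) uscalar uscalar_is_monoid_morphism.

End Unitization.

Section JetAlgebra.
Variables (P : product_rule) (S : comAlgType rat) (f : {rmorphism rat -> S}).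
Hypothesis sP : special P.

Definition jet_mul (x y : S * S) : S * S := (x.1 * y.1, prule P f x.1 x.2 y.1 y.2).

Lemma jet_mulC : commutative jet_mul.
Proof. by move=> [a da] [b db]; rewrite /jet_mul /= mulrC pruleC. Qed.

Lemma jet_mulA : associative jet_mul.
Proof. by move=> [a da] [b db] [c dc]; rewrite /jet_mul /= mulrA pruleA. Qed.

Lemma jet_mulDl : left_distributive jet_mul +%R.
Proof. by move=> [a da] [b db] [c dc]; rewrite /jet_mul /= mulrDl pruleD. Qed.

Lemma jet_mulZl (k : rat) (x y : S * S) : jet_mul (k *: x) y = k *: jet_mul x y.
Proof. by case: x y => [a da] [b db]; rewrite /jet_mul /= -scalerAl pruleZ. Qed.

Definition jet_alg : nuComAlg := NuComAlg jet_mulC jet_mulA jet_mulDl jet_mulZl.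

End JetAlgebra.

Section FormalDerivative.
Variables (P : product_rule) (X : finType).

Definition inl_term (t : term X) : term (X + X) := subst (fun x => Var (inl x)) t.

Fixpoint dterm (t : term X) : term (X + X) :=
  match t with
  | Var x => Var (inr x)
  | Zero => Zero
  | Scale c u => Scale c (dterm u)
  | Add u v => Add (dterm u) (dterm v)
  | Mul u v => papp P (inl_term u) (dterm u) (inl_term v) (dterm v)
  end.

Definition dsubst (D : X -> term X) (y : X + X) : term X :=
  match y with inl x => Var x | inr x => D x end.

Lemma subst_inl_term (D : X -> term X) (t : term X) : subst (dsubst D) (inl_term t) = t.
Proof. by rewrite subst_comp subst_Var. Qed.

Lemma pext_dterm (D : X -> term X) (t : term X) : pext P D t = subst (dsubst D) (dterm t).
Proof.
elim: t => //= [c u ->|u -> v ->|u IHu v IHv] //.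
by rewrite subst_papp !subst_inl_term IHu IHv.
Qed.

Hypothesis sP : special P.

Local Notation J := (jet_alg (@mpolyC _ rat) sP).

Definition jet_var (x : X) : unitization J :=
  (0, (poly_of (Var (inl x)), poly_of (Var (inr x)))).

Lemma teval_jet (t : term X) :
  teval (@uscalar J) jet_var t = (0, (poly_of (inl_term t), poly_of (dterm t))).
Proof.
elim: t => [x| |c u IH|u IHu v IHv|u IHu v IHv] //.
- by rewrite /= IH umulE /umul /= mulr0 scale0r /jet_mul /= mul0r prule0 // !addr0.
- by rewrite /= IHu IHv; congr (_, _); rewrite /= addr0.
- rewrite /= IHu IHv umulE /umul /= mulr0 !scale0r addr0 add0r /jet_mul /=.
  by rewrite [poly_of (papp _ _ _ _ _)]poly_ofE teval_papp -!poly_ofE.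
Qed.

Lemma approx_dterm (u v : term X) : approx u v -> approx (dterm u) (dterm v).
Proof.
move=> uv; have := approx_teval (@uscalar J) jet_var uv.
by rewrite !teval_jet => -[].
Qed.

Lemma approx_pext (D : X -> term X) (u v : term X) :
  approx u v -> approx (pext P D u) (pext P D v).
Proof. by move=> uv; rewrite !pext_dterm; apply/approx_subst/approx_dterm. Qed.

End FormalDerivative.

Theorem mainTheorem9 (P : product_rule) (Sigma X : finType) :
  special P ->
  forall (A : automaton Sigma X) (u v : term X),
    approx u v -> sem P A u = sem P A v.
Proof.
move=> sP A u v uv; apply: functional_extensionality => w.
elim: w u v uv => [|a w IH] u v uv; rewrite /sem /=.
  by rewrite !evalFE; apply: approx_teval.
by apply: IH; apply: approx_pext.
Qed.
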